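(* Let $n\ge 2$ be an integer and $A\subseteq L_n$. The following are equivalent: (i) $(X_n,\tau(A))$ is Lindelöf; (ii) $(X_n,\tau(A))$ is paracompact; (iii) $(X_n,\tau(A))$ is countably paracompact; (iv) $(X_n,\tau(A))$ is normal; (v) $L_n\setminus A$ does not contain a closed uncountable subset of $(L_n,\tau_E|_{L_n})$.
   Context: For $\overline{x},\overline{a}\in\mathbb R^n$ let $|\overline{x}-\overline{a}|$ be the Euclidean distance and $B(\overline{a},\epsilon)=\{\overline{x}\in\mathbb R^n:|\overline{x}-\overline{a}|<\epsilon\}$. Let $P_n=\{\overline{x}\in\mathbb R^n: x_n>0\}$, $L_n=\{\overline{x}\in\mathbb R^n: x_n=0\}$, $X_n=P_n\cup L_n$, and let $\tau_E$ denote the Euclidean topology on $X_n$. For $\overline{a}\in L_n$ and $\epsilon>0$ put $\overline{a(\epsilon)}=(a_1,\dots,a_{n-1},\epsilon)$ and $\tilde B(\overline{a},\epsilon)=\{\overline{a}\}\cup B(\overline{a(\epsilon)},\epsilon)$. For $A\subseteq L_n$, the topology $\tau(A)$ on $X_n$ is generated by the local bases: at $\overline{a}\in P_n$, the sets $B(\overline{a},\epsilon)$ with $0<\epsilon<a_n$; at $\overline{a}\in A$, the sets $B(\overline{a},\epsilon)\cap X_n$ with $\epsilon>0$; at $\overline{a}\in L_n\setminus A$, the sets $\tilde B(\overline{a},\epsilon)$ with $\epsilon>0$. *)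

From HB Require Import structures.
From mathcomp Require Import all_boot all_order all_algebra.
From mathcomp Require Import boolp classical_sets cardinality reals.
Set Implicit Arguments. Unset Strict Implicit. Unset Printing Implicit Defensive.
Import Order.TTheory GRing.Theory Num.Theory.
Local Open Scope classical_set_scope.
Local Open Scope ring_scope.

(* Points of R^(m.+1): functions 'I_(m.+1) -> R; the last coordinate x_n is
   the coordinate ord_max.  (The paper's n is m.+1.) *)
Definition pt (R : realType) (m : nat) := 'I_m.+1 -> R.

Definition edist (R : realType) (m : nat) (x a : pt R m) : R :=
  Num.sqrt (\sum_(i < m.+1) (x i - a i) ^+ 2).

Definition eball (R : realType) (m : nat) (a : pt R m) (e : R) : set (pt R m) :=
  [set x | edist x a < e].

Definition Pn (R : realType) (m : nat) : set (pt R m) := [set x | 0 < x ord_max].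
Definition Ln (R : realType) (m : nat) : set (pt R m) := [set x | x ord_max = 0].
Definition Xn (R : realType) (m : nat) : set (pt R m) := @Pn R m `|` @Ln R m.

Definition a_eps (R : realType) (m : nat) (a : pt R m) (e : R) : pt R m :=
  fun i => if i == ord_max then e else a i.

Definition tball (R : realType) (m : nat) (a : pt R m) (e : R) : set (pt R m) :=
  [set a] `|` eball (a_eps a e) e.

Definition tau_base (R : realType) (m : nat) (A : set (pt R m)) (a : pt R m)
    (V : set (pt R m)) : Prop :=
  (@Pn R m a /\ exists e : R, 0 < e /\ e < a ord_max /\ V = eball a e)
  \/ (A a /\ exists e : R, 0 < e /\ V = eball a e `&` @Xn R m)
  \/ (@Ln R m a /\ ~ A a /\ exists e : R, 0 < e /\ V = tball a e).

Definition tau_open (R : realType) (m : nat) (A : set (pt R m))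
    (U : set (pt R m)) : Prop :=
  U `<=` @Xn R m /\
  forall a, U a -> exists V, tau_base A a V /\ V `<=` U.

Definition closed_in {T} (X : set T) (op : set T -> Prop) (F : set T) : Prop :=
  F `<=` X /\ op (X `\` F).

Definition open_cover {T} (X : set T) (op : set T -> Prop) {I : Type}
    (U : I -> set T) : Prop :=
  (forall i, op (U i)) /\ X `<=` \bigcup_i U i.

Definition refines {T} {I J : Type} (V : J -> set T) (U : I -> set T) : Prop :=
  forall j, exists i, V j `<=` U i.

Definition locally_finite {T} (X : set T) (op : set T -> Prop) {J : Type}
    (V : J -> set T) : Prop :=
  forall x, X x -> exists W, op W /\ W x /\
    finite_set [set j | V j `&` W !=set0].

Definition lindelof {T} (X : set T) (op : set T -> Prop) : Prop :=
  forall (I : Type) (U : I -> set T), open_cover X op U ->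
    exists J : set I, countable J /\ X `<=` \bigcup_(i in J) U i.

Definition paracompact {T} (X : set T) (op : set T -> Prop) : Prop :=
  forall (I : Type) (U : I -> set T), open_cover X op U ->
    exists (J : Type) (V : J -> set T),
      open_cover X op V /\ refines V U /\ locally_finite X op V.

Definition countably_paracompact {T} (X : set T) (op : set T -> Prop) : Prop :=
  forall (U : nat -> set T), open_cover X op U ->
    exists (J : Type) (V : J -> set T),
      open_cover X op V /\ refines V U /\ locally_finite X op V.

Definition normal {T} (X : set T) (op : set T -> Prop) : Prop :=
  forall F G, closed_in X op F -> closed_in X op G -> F `&` G = set0 ->
    exists U V, op U /\ op V /\ F `<=` U /\ G `<=` V /\ U `&` V = set0.

Definition closed_in_Ln (R : realType) (m : nat) (F : set (pt R m)) : Prop :=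
  F `<=` @Ln R m /\
  forall x, @Ln R m x -> ~ F x -> exists e : R, 0 < e /\ eball x e `&` F = set0.

From HB Require Import structures.
From mathcomp Require Import all_boot all_order all_algebra.
From mathcomp Require Import boolp classical_sets cardinality reals.
From mathcomp Require Import ring lra.
Import Order.TTheory GRing.Theory Num.Theory.
Set Implicit Arguments. Unset Strict Implicit. Unset Printing Implicit Defensive.
Local Open Scope classical_set_scope.
Local Open Scope ring_scope.

(* The space X_n with tau(A) is regular, so Lindelof implies paracompact and normal.
   A closed F in L_n \ A is closed and discrete in tau(A), since a tangent ball meets L_n
   only in its base point; hence Lindelof forces such F to be countable.  Conversely, given
   an open cover, the points of L_n lying in no rational Euclidean ball subordinate to the
   cover form a closed subset of L_n \ A, which is countable under (v); together with
   countably many rational balls this gives a countable subcover.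
   Finally let F in L_n \ A be closed and uncountable, and {q_j} dense in its condensation
   points.  Whatever the radii r_j > 0, a Baire category argument yields x in F \ {q_j} with
   q_j arbitrarily close to x compared with r_j, so the tangent ball at x meets those at
   infinitely many q_j.  Hence {q_j} and F \ {q_j} cannot be separated (not normal), and
   the countable cover {X \ {q_j}} u {(X \ F) u B~(q_j, 1)} has no locally finite open
   refinement (not countably paracompact). *)

Section SumOfSquares.
Variables (R : rcfType) (n : nat).

Lemma sum_sqr_ge0 (u : 'I_n -> R) : 0 <= \sum_i u i ^+ 2.
Proof. by apply: sumr_ge0 => i _; exact: sqr_ge0. Qed.

Lemma sum_sqr_eq0 (u : 'I_n -> R) : \sum_i u i ^+ 2 = 0 -> forall i, u i = 0.
Proof.
move=> u0 i; have := @psumr_eq0P _ _ _ _ (fun i _ => sqr_ge0 (u i)) u0 i isT.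
by move/eqP; rewrite sqrf_eq0 => /eqP.
Qed.

Lemma cauchy_schwarz (u v : 'I_n -> R) :
  \sum_i u i * v i <= Num.sqrt (\sum_i u i ^+ 2) * Num.sqrt (\sum_i v i ^+ 2).
Proof.
set a := Num.sqrt _; set b := Num.sqrt _.
have a2 : a ^+ 2 = \sum_i u i ^+ 2 by rewrite sqr_sqrtr ?sum_sqr_ge0.
have b2 : b ^+ 2 = \sum_i v i ^+ 2 by rewrite sqr_sqrtr ?sum_sqr_ge0.
have vanish (w : 'I_n -> R) : Num.sqrt (\sum_i w i ^+ 2) = 0 -> forall i, w i = 0.
  by move/eqP; rewrite sqrtr_eq0 => w0; apply: sum_sqr_eq0; apply/eqP;
    rewrite eq_le w0 sum_sqr_ge0.
have [a0|a0] := eqVneq a 0.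
  by rewrite a0 mul0r big1 // => i _; rewrite (vanish u a0) mul0r.
have [b0|b0] := eqVneq b 0.
  by rewrite b0 mulr0 big1 // => i _; rewrite (vanish v b0) mulr0.
have ab_gt0 : 0 < a * b by rewrite mulr_gt0 // lt0r ?sqrtr_ge0 ?andbT.
have expand i : (b * u i - a * v i) ^+ 2 =
    b ^+ 2 * u i ^+ 2 - a * b * 2 * (u i * v i) + a ^+ 2 * v i ^+ 2 by ring.
have := sum_sqr_ge0 (fun i => b * u i - a * v i).
rewrite (eq_bigr _ (fun i _ => expand i)) big_split /= sumrB -!mulr_sumr -a2 -b2.
set S := \sum_i _; nra.
Qed.

End SumOfSquares.

Section Euclid.
Variables (R : realType) (m : nat).
Local Notation P := (pt R m).

Definition sqdist (x a : P) := \sum_(i < m.+1) (x i - a i) ^+ 2.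

Lemma sqdist_ge0 (x a : P) : 0 <= sqdist x a.
Proof. exact: sum_sqr_ge0. Qed.

Lemma edist_ge0 (x a : P) : 0 <= edist x a.
Proof. exact: sqrtr_ge0. Qed.

Lemma sqr_edist (x a : P) : edist x a ^+ 2 = sqdist x a.
Proof. by rewrite sqr_sqrtr // sqdist_ge0. Qed.

Lemma edist_ltE (x a : P) (e : R) : 0 <= e -> (edist x a < e) = (sqdist x a < e ^+ 2).
Proof. by move=> e0; rewrite -sqr_edist ltr_pXn2r // nnegrE edist_ge0. Qed.

Lemma edist_leE (x a : P) (e : R) : 0 <= e -> (edist x a <= e) = (sqdist x a <= e ^+ 2).
Proof. by move=> e0; rewrite -sqr_edist ler_pXn2r // nnegrE edist_ge0. Qed.

Lemma edistC (x a : P) : edist x a = edist a x.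
Proof. by rewrite /edist; congr Num.sqrt; apply: eq_bigr => i _; rewrite -sqrrN opprB. Qed.

Lemma edistxx (x : P) : edist x x = 0.
Proof. by rewrite /edist big1 ?sqrtr0 // => i _; rewrite subrr expr0n. Qed.

Lemma sqdist_eq0 (x a : P) : sqdist x a = 0 -> x = a.
Proof. by move/sum_sqr_eq0 => xa; apply: funext => i; apply/eqP; rewrite -subr_eq0 xa. Qed.

Lemma edist_eq0 (x a : P) : edist x a = 0 -> x = a.
Proof. by move=> xa; apply: sqdist_eq0; rewrite -sqr_edist xa expr0n. Qed.

Lemma edist_gt0 (x a : P) : x <> a -> 0 < edist x a.
Proof. by move=> xa; rewrite lt0r edist_ge0 andbT; apply/eqP => /edist_eq0. Qed.

Lemma coord_le_edist (x a : P) i : `|x i - a i| <= edist x a.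
Proof.
rewrite -sqrtr_sqr ler_sqrt ?sqdist_ge0 // /sqdist (bigD1 i) //= lerDl.
by apply: sumr_ge0 => j _; exact: sqr_ge0.
Qed.

Lemma edist_le_coord (x a : P) (r : R) : 0 <= r ->
  (forall i, `|x i - a i| <= r) -> edist x a <= m.+1%:R * r.
Proof.
move=> r0 xar; rewrite edist_leE ?mulr_ge0 //.
apply: (@le_trans _ _ (\sum_(i < m.+1) r ^+ 2)).
  by apply: ler_sum => i _; rewrite -real_normK ?num_real // lerXn2r ?nnegrE.
have m1 : m.+1%:R <= m.+1%:R ^+ 2 :> R by rewrite expr2 ler_peMl ?ler0n ?ler1n.
rewrite sumr_const card_ord exprMn -[_ *+ _]mulr_natl.
by rewrite ler_wpM2r // sqr_ge0.
Qed.

Lemma edist_triangle (x y z : P) : edist x z <= edist x y + edist y z.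
Proof.
rewrite edist_leE ?addr_ge0 ?edist_ge0 //.
have split_sqr i : (x i - z i) ^+ 2 =
    (x i - y i) ^+ 2 + 2 * ((x i - y i) * (y i - z i)) + (y i - z i) ^+ 2 by ring.
rewrite /sqdist (eq_bigr _ (fun i _ => split_sqr i)) !big_split /= -mulr_sumr.
rewrite -/(sqdist x y) -/(sqdist y z) -!sqr_edist.
have := cauchy_schwarz (fun i => x i - y i) (fun i => y i - z i).
rewrite -/(edist x y) -/(edist y z); nra.
Qed.

End Euclid.

Section TangentBall.
Variables (R : realType) (m : nat).
Local Notation P := (pt R m).
Local Notation widen := (widen_ord (leqnSn m)).

Definition hsqdist (x a : P) := \sum_(i < m) (x (widen i) - a (widen i)) ^+ 2.

Lemma hsqdist_ge0 (x a : P) : 0 <= hsqdist x a.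
Proof. exact: sum_sqr_ge0. Qed.

Lemma sqdist_split (x a : P) : sqdist x a = hsqdist x a + (x ord_max - a ord_max) ^+ 2.
Proof. by rewrite /sqdist big_ord_recr. Qed.

Lemma sqdist_Ln (z x : P) : Ln x -> sqdist z x = hsqdist z x + z ord_max ^+ 2.
Proof. by rewrite /Ln /= sqdist_split => ->; rewrite subr0. Qed.

Lemma a_eps_max (a : P) e : a_eps a e ord_max = e.
Proof. by rewrite /a_eps eqxx. Qed.

Lemma a_eps_widen (a : P) e (i : 'I_m) : a_eps a e (widen i) = a (widen i).
Proof. by rewrite /a_eps eqE /= ltn_eqF. Qed.

Lemma hsqdist_a_epsr (z x : P) e : hsqdist z (a_eps x e) = hsqdist z x.
Proof. by apply: eq_bigr => i _; rewrite a_eps_widen. Qed.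

Lemma hsqdist_a_epsl (z x : P) e : hsqdist (a_eps x e) z = hsqdist x z.
Proof. by apply: eq_bigr => i _; rewrite a_eps_widen. Qed.

Lemma hsqdistxx (x : P) : hsqdist x x = 0.
Proof. by apply: big1 => i _; rewrite subrr expr0n. Qed.

Lemma tangent_ballP (x z : P) (e : R) : 0 < e ->
  eball (a_eps x e) e z <-> hsqdist z x + z ord_max ^+ 2 < 2 * e * z ord_max.
Proof.
move=> e0; rewrite /eball /= (edist_ltE _ _ (ltW e0)) sqdist_split hsqdist_a_epsr a_eps_max.
by split => ?; lra.
Qed.

Lemma tangent_ball_Pn (x : P) (e : R) : 0 < e -> eball (a_eps x e) e `<=` @Pn R m.
Proof.
move=> e0 z /(tangent_ballP _ _ e0) ze.
have := hsqdist_ge0 z x; have := sqr_ge0 (z ord_max); rewrite /Pn /=; nra.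
Qed.

Lemma tangent_ball_le (x : P) (e1 e2 : R) : 0 < e1 -> e1 <= e2 ->
  eball (a_eps x e1) e1 `<=` eball (a_eps x e2) e2.
Proof.
move=> e10 e12 z ze1; have zn : 0 < z ord_max := tangent_ball_Pn e10 ze1.
move: ze1; rewrite !tangent_ballP //; last exact: lt_le_trans e12.
by nra.
Qed.

Lemma tangent_ball_edist (x z : P) (e : R) : 0 < e -> Ln x ->
  eball (a_eps x e) e z -> edist z x < 2 * e.
Proof.
move=> e0 Lx ze; have zn : 0 < z ord_max := tangent_ball_Pn e0 ze.
move: ze; rewrite tangent_ballP // edist_ltE ?sqdist_Ln //; last by lra.
by have := hsqdist_ge0 z x; nra.
Qed.

Lemma tball_meet (x y : P) (s r : R) : 0 < s -> 0 < r -> Ln x -> Ln y ->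
  edist x y < Num.min s r -> tball x s `&` tball y r !=set0.
Proof.
move=> s0 r0 Lx Ly; set t := Num.min s r.
have t0 : 0 < t by rewrite lt_min s0 r0.
have [ts tr] : t <= s /\ t <= r by split; rewrite ge_min lexx ?orbT.
rewrite (edist_ltE _ _ (ltW t0)) sqdist_Ln // Lx expr0n addr0 => xy.
exists (a_eps x t); split; right; rewrite tangent_ballP // hsqdist_a_epsl a_eps_max.
  by rewrite hsqdistxx; nra.
by have := hsqdist_ge0 x y; nra.
Qed.

Lemma closed_tangent_ball (x z : P) (e e' : R) : 0 < e -> e < e' -> Ln x ->
  0 <= z ord_max -> edist z (a_eps x e) <= e -> z = x \/ eball (a_eps x e') e' z.
Proof.
move=> e0 ee' Lx zn.
rewrite (edist_leE _ _ (ltW e0)) sqdist_split hsqdist_a_epsr a_eps_max => ze.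
have := hsqdist_ge0 z x; have [z0|z0] := eqVneq (z ord_max) 0 => hz.
  left; apply: sqdist_eq0; rewrite sqdist_Ln // z0 expr0n addr0.
  by move: ze; rewrite z0 sub0r sqrrN => ?; lra.
right; have zp : 0 < z ord_max by rewrite lt0r z0.
by rewrite tangent_ballP; [nra | lra].
Qed.

Lemma edist_a_eps (x : P) (e : R) : Ln x -> 0 <= e -> edist x (a_eps x e) = e.
Proof.
move=> Lx e0; rewrite /edist -/(sqdist _ _) sqdist_split hsqdist_a_epsr hsqdistxx.
by rewrite a_eps_max add0r Lx sub0r sqrrN sqrtr_sqr ger0_norm.
Qed.

Lemma coord_max_gt (z y : P) (e : R) : edist z y < e -> y ord_max - e < z ord_max.
Proof.
move=> /(le_lt_trans (coord_le_edist z y ord_max)).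
by rewrite ltr_norml => /andP[? _]; lra.
Qed.

End TangentBall.

Definition regular {T} (X : set T) (op : set T -> Prop) : Prop :=
  forall U x, op U -> U x ->
    exists V C, op V /\ closed_in X op C /\ V x /\ V `<=` C /\ C `<=` U.

Definition topology_on {T} (X : set T) (op : set T -> Prop) : Prop :=
  [/\ forall U, op U -> U `<=` X, op set0, op X,
    forall U V, op U -> op V -> op (U `&` V) &
    forall (I : Type) (D : set I) (U : I -> set T),
      (forall i, D i -> op (U i)) -> op (\bigcup_(i in D) U i)].

Section LindelofRegular.
Variables (T : pointedType) (X : set T) (op : set T -> Prop).
Hypotheses (op_top : topology_on X op) (op_regular : regular X op).

Let op_subX : forall U, op U -> U `<=` X. Proof. by case: op_top. Qed.
Let op_set0 : op set0. Proof. by case: op_top. Qed.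
Let op_setT : op X. Proof. by case: op_top. Qed.
Let op_setI : forall U V, op U -> op V -> op (U `&` V). Proof. by case: op_top. Qed.
Let op_bigcup : forall (I : Type) (D : set I) (U : I -> set T),
  (forall i, D i -> op (U i)) -> op (\bigcup_(i in D) U i).
Proof. by case: op_top. Qed.

Lemma closed_in_set0 : closed_in X op set0.
Proof. by split => //; rewrite setD0. Qed.

Lemma closed_in_setT : closed_in X op X.
Proof. by split => //; rewrite setDv. Qed.

Lemma closed_inU (C D : set T) :
  closed_in X op C -> closed_in X op D -> closed_in X op (C `|` D).
Proof.
by move=> [CX oC] [DX oD]; split; [rewrite subUset | rewrite setDUr; exact: op_setI].
Qed.

Lemma closed_in_bigcup_ord n (C : nat -> set T) :
  (forall k, closed_in X op (C k)) -> closed_in X op (\bigcup_(k < n) C k).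
Proof.
move=> cC; rewrite bigcup_mkord.
by elim/big_ind: _ => //; [exact: closed_in_set0 | exact: closed_inU].
Qed.

Lemma open_setD_closed (U C : set T) : op U -> closed_in X op C -> op (U `\` C).
Proof.
move=> oU [_ oC]; suff -> : U `\` C = U `&` (X `\` C) by exact: op_setI.
by rewrite setIDA setIidl //; exact: op_subX.
Qed.

Lemma regular_choice (F : set T) (W : T -> set T) :
  (forall x, F x -> op (W x) /\ W x x) ->
  exists V C : T -> set T, [/\ forall x, op (V x), forall x, closed_in X op (C x),
    forall x, V x `<=` C x, forall x, C x `<=` W x & forall x, F x -> V x x].
Proof.
move=> oW; have pick x : exists VC : set T * set T, [/\ op VC.1, closed_in X op VC.2,
    VC.1 `<=` VC.2, VC.2 `<=` W x & F x -> VC.1 x].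
  have [Fx|nFx] := pselect (F x).
    have [V [C [oV [cC [Vx [VC CW]]]]]] := op_regular (oW x Fx).1 (oW x Fx).2.
    by exists (V, C).
  by exists (set0, set0); split=> //; exact: closed_in_set0.
have [VC VCP] := choice pick; exists (fst \o VC), (snd \o VC).
by split=> x; have [] := VCP x.
Qed.

Lemma lindelof_closed_seq (F : set T) (V : T -> set T) : lindelof X op ->
  closed_in X op F -> (forall x, F x -> op (V x) /\ V x x) ->
  exists g : nat -> T, forall z, F z -> exists n, V (g n) z.
Proof.
move=> L [FX oF] oV.
pose W x := if `[< F x >] then V x else X `\` F.
have [|J [cJ XJ]] := L _ W.
  split=> [x|z Xz]; rewrite /W.
    by case: asboolP => [Fx|_]; [exact: (oV x Fx).1 | exact: open_setD_closed].
  by exists z => //; case: asboolP => [Fz|nFz]; [exact: (oV z Fz).2 | split].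
have [g gJ] := pcard_surjP cJ.
exists g => z Fz; have [x Jx] := XJ z (FX z Fz).
rewrite /W; case: asboolP => [_ Vxz|_ [] //].
by have [n _ gn] := gJ x Jx; exists n; rewrite gn.
Qed.

Lemma lindelof_paracompact : lindelof X op -> paracompact X op.
Proof.
move=> L I U [oU XU]; have [[x0 Xx0]|X0] := pselect (X !=set0); last first.
  exists I, U; split=> //; split=> [i|x Xx]; first by exists i.
  by case: X0; exists x.
have [i0 _] := XU x0 Xx0.
have pickI x : exists i, X x -> U i x.
  by have [/XU[i _ Uix]|] := pselect (X x); [exists i | exists i0].
have [iX UiX] := choice pickI.
have [V [C [oV cC VC CU XV]]] :=
  regular_choice (F := X) (W := U \o iX) (fun x Xx => conj (oU _) (UiX x Xx)).
have [g Vg] := lindelof_closed_seq L closed_in_setT (fun x Xx => conj (oV x) (XV x Xx)).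
pose D n := U (iX (g n)) `\` \bigcup_(k < n) C (g k).
exists nat, D; split; [split|split].
- move=> n; apply: open_setD_closed; first exact: oU.
  by apply: closed_in_bigcup_ord => k; exact: cC.
- move=> z Xz; have [n Vz] := Vg z Xz.
  have ex_n : exists n, `[< C (g n) z >] by exists n; apply/asboolP; exact: VC.
  case: (ex_minnP ex_n) => k /asboolP Cz kmin.
  exists k => //; split; first exact: CU.
  by move=> [l /= lk /asboolP/kmin]; rewrite leqNgt lk.
- by move=> n; exists (iX (g n)) => z [].
move=> z Xz; have [n Vz] := Vg z Xz.
exists (V (g n)); split=> //; split=> //.
apply: (sub_finite_set _ (finite_II n.+1)) => j [y [[_ nCy] Vy]] /=.
by rewrite ltnNge; apply/negP => nj; apply: nCy; exists n => //; exact: VC.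
Qed.

Lemma lindelof_closed_nbhs_seq (F G : set T) : lindelof X op ->
  closed_in X op F -> closed_in X op G -> F `&` G = set0 ->
  exists (g : nat -> T) (V C : T -> set T), [/\ forall x, op (V x),
    forall x, closed_in X op (C x), forall x, V x `<=` C x,
    forall x, C x `<=` X `\` G & F `<=` \bigcup_n V (g n)].
Proof.
move=> L cF [GX oG] FG.
have FXG x : F x -> op (X `\` G) /\ (X `\` G) x.
  move=> Fx; split=> //; split=> [|Gx]; first exact: cF.1.
  by have : (F `&` G) x by []; rewrite FG.
have [V [C [oV cC VC CXG FV]]] := regular_choice FXG.
have [g Vg] := lindelof_closed_seq L cF (fun x Fx => conj (oV x) (FV x Fx)).
by exists g, V, C; split=> // z /Vg[n Vz]; exists n.
Qed.

Lemma lindelof_normal : lindelof X op -> normal X op.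
Proof.
move=> L F G cF cG FG.
have [g [V [C [oV cC VC CG FV]]]] := lindelof_closed_nbhs_seq L cF cG FG.
have [h [V' [C' [oV' cC' VC' C'F GV']]]] :=
  lindelof_closed_nbhs_seq L cG cF ltac:(by rewrite setIC).
exists (\bigcup_n (V (g n) `\` \bigcup_(k < n.+1) C' (h k))).
exists (\bigcup_n (V' (h n) `\` \bigcup_(k < n.+1) C (g k))).
split; [|split; [|split; [|split]]].
- apply: op_bigcup => n _; apply: open_setD_closed => //.
  by apply: closed_in_bigcup_ord => k; exact: cC'.
- apply: op_bigcup => n _; apply: open_setD_closed => //.
  by apply: closed_in_bigcup_ord => k; exact: cC.
- move=> z Fz; have [n _ Vz] := FV z Fz; exists n => //.
  by split=> // -[k _ /C'F[_ nFz]]; exact: nFz.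
- move=> z Gz; have [n _ Vz] := GV' z Gz; exists n => //.
  by split=> // -[k _ /CG[_ nGz]]; exact: nGz.
apply/seteqP; split=> // z [[n _ [Vz nC'z]] [p _ [V'z nCz]]].
have [np|pn] := leqP n p.
  by apply: nCz; exists n; [rewrite /= ltnS | exact: VC].
by apply: nC'z; exists p; [rewrite /= ltnS ltnW | exact: VC'].
Qed.

End LindelofRegular.

(* [lindelof_closed_seq] enumerates countable sets of points, which needs a default point. *)
Section PointedPoints.
Variables (R : realType) (m : nat).
HB.instance Definition _ := Choice.on (pt R m).
HB.instance Definition _ := isPointed.Build (pt R m) (fun _ => 0).
End PointedPoints.

Section TauTopology.
Variables (R : realType) (m : nat) (A : set (pt R m)).
Hypothesis AL : A `<=` @Ln R m.
Local Notation P := (pt R m).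
Local Notation X := (@Xn R m).
Local Notation op := (tau_open A).

Lemma Pn_Ln (a : P) : Pn a -> ~ Ln a.
Proof. by rewrite /Pn /Ln /= => + a0; rewrite a0 ltxx. Qed.

Lemma Pn_eball (a : P) e : e <= a ord_max -> eball a e `<=` @Pn R m.
Proof. by move=> ea z /coord_max_gt; rewrite /Pn /=; lra. Qed.

Lemma tball_subX (a : P) e : Ln a -> 0 < e -> tball a e `<=` X.
Proof. by move=> La e0 z [->|/(tangent_ball_Pn e0)]; [right | left]. Qed.

Lemma tball_Ln (a z : P) e : 0 < e -> tball a e z -> Ln z -> z = a.
Proof. by move=> e0 [//|/(tangent_ball_Pn e0) Pz /(Pn_Ln Pz)]. Qed.

Lemma tau_openP (U : set P) : U `<=` X ->
  (forall a, U a -> Pn a -> exists e, 0 < e /\ e < a ord_max /\ eball a e `<=` U) ->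
  (forall a, U a -> A a -> exists e, 0 < e /\ eball a e `&` X `<=` U) ->
  (forall a, U a -> Ln a -> ~ A a -> exists e, 0 < e /\ tball a e `<=` U) ->
  op U.
Proof.
move=> UX oPn oA oLA; split=> // a Ua; case: (UX a Ua) => [Pa|La].
  have [e [e0 [ea eU]]] := oPn a Ua Pa.
  by exists (eball a e); split=> //; left; split=> //; exists e.
have [Aa|nAa] := pselect (A a).
  have [e [e0 eU]] := oA a Ua Aa.
  by exists (eball a e `&` X); split=> //; right; left; split=> //; exists e.
have [e [e0 eU]] := oLA a Ua La nAa.
by exists (tball a e); split=> //; right; right; do 2!split=> //; exists e.
Qed.

Lemma tau_open_Pn (U : set P) a : op U -> U a -> Pn a ->
  exists e, 0 < e /\ e < a ord_max /\ eball a e `<=` U.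
Proof.
move=> [_ oU] Ua Pa; have [V [bV]] := oU a Ua.
case: bV => [[_ [e [e0 [ea ->]]]]|[[/AL La _]|[La _]]];
  [by exists e | by case: (Pn_Ln Pa La) ..].
Qed.

Lemma tau_open_A (U : set P) a : op U -> U a -> A a ->
  exists e, 0 < e /\ eball a e `&` X `<=` U.
Proof.
move=> [_ oU] Ua Aa; have [V [bV]] := oU a Ua.
case: bV => [[Pa _]|[[_ [e [e0 ->]]]|[_ [nAa _]]]]; [|by exists e|by []].
by case: (Pn_Ln Pa (AL Aa)).
Qed.

Lemma tau_open_tball (U : set P) a : op U -> U a -> Ln a -> ~ A a ->
  exists e, 0 < e /\ tball a e `<=` U.
Proof.
move=> [_ oU] Ua La nAa; have [V [bV]] := oU a Ua.
case: bV => [[Pa _]|[[Aa _]|[_ [_ [e [e0 ->]]]]]]; [|by []|by exists e].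
by case: (Pn_Ln Pa La).
Qed.

Lemma tau_open_euclid (U : set P) : U `<=` X ->
  (forall y, U y -> exists e, 0 < e /\ forall z, X z -> edist z y < e -> U z) ->
  op U.
Proof.
move=> UX oU; apply: tau_openP => // a Ua.
- move=> Pa; have [e [e0 eU]] := oU a Ua; have an : 0 < a ord_max := Pa.
  exists (Num.min e (a ord_max / 2)); split; first by rewrite lt_min e0 divr_gt0.
  split=> [|z]; first by rewrite gt_min; apply/orP; right; lra.
  rewrite /eball /= lt_min => /andP[ze za]; apply: eU => //; left.
  by apply: (@Pn_eball a (a ord_max / 2)); [lra | exact: za].
- by move=> _; have [e [e0 eU]] := oU a Ua; exists e; split=> // z [ze Xz]; exact: eU.
- move=> La _; have [e [e0 eU]] := oU a Ua.
  have e20 : 0 < e / 2 by lra.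
  exists (e / 2); split=> // z [->|ze] //; apply: eU; first by left; exact: tangent_ball_Pn ze.
  by have := tangent_ball_edist e20 La ze; rewrite mulrC divfK ?pnatr_eq0.
Qed.

Lemma tau_open_setT : op X.
Proof. by apply: tau_open_euclid => // y _; exists 1; split. Qed.

Lemma tau_open_set0 : op set0.
Proof. by split=> // a. Qed.

Lemma tball_open (a : P) e : Ln a -> ~ A a -> 0 < e -> op (tball a e).
Proof.
move=> La nAa e0; apply: tau_openP; first exact: tball_subX.
- move=> z [->|ze] Pz; first by case: (Pn_Ln Pz La).
  have zn : 0 < z ord_max := Pz.
  have d0 : 0 < e - edist z (a_eps a e) by rewrite subr_gt0.
  exists (Num.min (e - edist z (a_eps a e)) (z ord_max / 2)).
  split; first by rewrite lt_min d0 divr_gt0.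
  split=> [|y]; first by rewrite gt_min; apply/orP; right; lra.
  rewrite /eball /= lt_min => /andP[yz _]; right.
  by have := edist_triangle y z (a_eps a e); rewrite /eball /=; lra.
- move=> z [->|ze] Az; first by [].
  by case: (Pn_Ln (tangent_ball_Pn e0 ze) (AL Az)).
- move=> z [->|ze] Lz nAz; first by exists e; split.
  by case: (Pn_Ln (tangent_ball_Pn e0 ze) Lz).
Qed.

Lemma tau_openI (U V : set P) : op U -> op V -> op (U `&` V).
Proof.
move=> oU oV; apply: tau_openP; first by move=> z [/oU.1].
- move=> a [Ua Va] Pa.
  have [e1 [e10 [e1a s1]]] := tau_open_Pn oU Ua Pa.
  have [e2 [e20 [e2a s2]]] := tau_open_Pn oV Va Pa.
  exists (Num.min e1 e2); split; first by rewrite lt_min e10 e20.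
  split=> [|z]; first by rewrite gt_min e1a.
  by rewrite /eball /= lt_min => /andP[z1 z2]; split; [exact: s1 | exact: s2].
- move=> a [Ua Va] Aa.
  have [e1 [e10 s1]] := tau_open_A oU Ua Aa.
  have [e2 [e20 s2]] := tau_open_A oV Va Aa.
  exists (Num.min e1 e2); split; first by rewrite lt_min e10 e20.
  by move=> z []; rewrite /eball /= lt_min => /andP[z1 z2] Xz; split; [exact: s1 | exact: s2].
- move=> a [Ua Va] La nAa.
  have [e1 [e10 s1]] := tau_open_tball oU Ua La nAa.
  have [e2 [e20 s2]] := tau_open_tball oV Va La nAa.
  have e0 : 0 < Num.min e1 e2 by rewrite lt_min e10 e20.
  exists (Num.min e1 e2); split=> // z [->|ze]; first by split; [apply: s1 | apply: s2]; left.
  by split; [apply: s1 | apply: s2]; right; apply: tangent_ball_le ze => //;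
    rewrite ge_min lexx ?orbT.
Qed.

Lemma tau_open_bigcup (I : Type) (D : set I) (U : I -> set P) :
  (forall i, D i -> op (U i)) -> op (\bigcup_(i in D) U i).
Proof.
move=> oU; split=> [z [i Di /(oU i Di).1]//|a [i Di Ua]].
have [V [bV VU]] := (oU i Di).2 a Ua.
by exists V; split=> // z Vz; exists i => //; exact: VU.
Qed.

Lemma tau_openU (U V : set P) : op U -> op V -> op (U `|` V).
Proof.
move=> oU oV; rewrite -bigcup2inE; apply: tau_open_bigcup => i.
by case: i => [|[|]] //=.
Qed.

Lemma tau_topology : topology_on X op.
Proof.
split; [by move=> U [] | exact: tau_open_set0 | exact: tau_open_setT | exact: tau_openI |].
exact: tau_open_bigcup.
Qed.

Lemma cball_closed (c : P) (r : R) : closed_in X op (X `&` [set z | edist z c <= r]).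
Proof.
split=> [z []//|]; apply: tau_open_euclid => [z []//|y [Xy ycr]].
have rc : r < edist y c by rewrite ltNge; apply/negP => ?; apply: ycr.
exists (edist y c - r); split=> [|z Xz zy]; first by rewrite subr_gt0.
split=> // -[_ /= zc]; have := edist_triangle y z c; rewrite (edistC y z); lra.
Qed.

Lemma eball_open (a : P) e : op (eball a e `&` X).
Proof.
apply: tau_open_euclid => [z []//|y [ye Xy]].
exists (e - edist y a); split=> [|z Xz zy]; first by rewrite subr_gt0.
by split=> //; have := edist_triangle z y a; rewrite /eball /= in ye *; lra.
Qed.

Lemma tau_regular : regular X op.
Proof.
move=> U x oU Ux.
have ball_case e : 0 < e -> X x -> eball x e `&` X `<=` U ->
    exists V C, op V /\ closed_in X op C /\ V x /\ V `<=` C /\ C `<=` U.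
  move=> e0 Xx eU; exists (eball x (e / 2) `&` X), (X `&` [set z | edist z x <= e / 2]).
  split; first exact: eball_open.
  split; first exact: cball_closed.
  split; first by split=> //; rewrite /eball /= edistxx; lra.
  split; first by move=> z [ze Xz]; split=> //; exact: ltW.
  by move=> z [Xz /= ze]; apply: eU; split=> //; rewrite /eball /=; lra.
case: (oU.1 x Ux) => [Px|Lx].
  have [e [e0 [_ eU]]] := tau_open_Pn oU Ux Px.
  by apply: (ball_case e e0 (or_introl Px)) => z [ze _]; exact: eU.
have [Ax|nAx] := pselect (A x).
  by have [e [e0 eU]] := tau_open_A oU Ux Ax; exact: ball_case e0 (or_intror Lx) eU.
have [e [e0 eU]] := tau_open_tball oU Ux Lx nAx.
have e20 : 0 < e / 2 by lra.
exists (tball x (e / 2)), (X `&` [set z | edist z (a_eps x (e / 2)) <= e / 2]).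
split; first exact: tball_open.
split; first exact: cball_closed.
split; first by left.
split=> z.
  move=> zt; split; first exact: tball_subX zt.
  by case: zt => [->|/ltW //]; rewrite /= edist_a_eps // ltW.
move=> [Xz /= ze]; apply: eU.
have zn : 0 <= z ord_max by case: Xz => [/ltW //|->].
have ee : e / 2 < e by lra.
by have [->|?] := closed_tangent_ball e20 ee Lx zn ze; [left | right].
Qed.

End TauTopology.

Lemma countable_setU (T : Type) (A B : set T) :
  countable A -> countable B -> countable (A `|` B).
Proof.
move=> cA cB; rewrite -bigcup2inE; apply: bigcup_countable => // i _.
by case: i => [|[|]].
Qed.

Lemma countable_image (T U : Type) (f : T -> U) (A : set T) :
  countable A -> countable (f @` A).
Proof. exact: card_le_trans (card_image_le f A). Qed.

Section RationalBalls.
Variables (R : realType) (m : nat).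
Local Notation P := (pt R m).
Local Notation QT := ({ffun 'I_m.+1 -> rat} * rat)%type.

Definition qball (t : QT) : set P := eball (fun i => ratr (t.1 i)) (ratr t.2).

Lemma qball_between (x : P) (e : R) : 0 < e ->
  exists t : QT, qball t x /\ qball t `<=` eball x e.
Proof.
move=> e0; have m0 : 0 < m.+1%:R :> R by rewrite ltr0n.
pose d := e / (3 * m.+1%:R).
have d0 : 0 < d by rewrite divr_gt0 // mulr_gt0.
have near_coord i : exists q : rat, x i - d < ratr q < x i + d.
  by have [q] := @rat_in_itvoo R (x i - d) (x i + d) ltac:(lra); rewrite in_itv; exists q.
have [c xc] := choice near_coord.
have [r] := @rat_in_itvoo R (e / 3) (2 * e / 3) ltac:(lra); rewrite in_itv /= => /andP[r1 r2].
exists ([ffun i => c i], r); rewrite /qball /eball /=.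
set y : P := fun i => _.
have xy : edist x y <= e / 3.
  have -> : e / 3 = m.+1%:R * d by rewrite /d; field; rewrite addrC natr1 pnatr_eq0.
  apply: edist_le_coord => [|i]; first exact: ltW.
  by rewrite /y ffunE ler_norml; have /andP[? ?] := xc i; apply/andP; split; lra.
split=> [|z /= zy]; first by lra.
by have := edist_triangle z y x; have := edistC x y; lra.
Qed.

Lemma qball_open (t : QT) (x : P) : qball t x -> exists e, 0 < e /\ eball x e `<=` qball t.
Proof.
rewrite /qball /eball /= => xt; exists (ratr t.2 - edist x (fun i => ratr (t.1 i))).
split=> [|z /= zx]; first by rewrite subr_gt0.
by have := edist_triangle z x (fun i => ratr (t.1 i)); lra.
Qed.

End RationalBalls.

Definition contains_uncountable_closed (R : realType) (m : nat) (S : set (pt R m)) :=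
  exists F, F `<=` S /\ closed_in_Ln F /\ ~ countable F.

Section LindelofCriterion.
Variables (R : realType) (m : nat) (A : set (pt R m)).
Hypothesis AL : A `<=` @Ln R m.
Local Notation P := (pt R m).
Local Notation X := (@Xn R m).
Local Notation op := (tau_open A).

Lemma closed_outside_discrete (F S : set P) : F `<=` @Ln R m `\` A -> closed_in_Ln F ->
  S `<=` F -> closed_in X op S.
Proof.
move=> FLA [_ cF] SF; split=> [z /SF/FLA[Lz _]|]; first by right.
apply: tau_openP => [z []//|a _ Pa|a _ Aa|a XSa La _].
- have an : 0 < a ord_max := Pa.
  have aP : eball a (a ord_max / 2) `<=` @Pn R m by apply: Pn_eball; lra.
  exists (a ord_max / 2); split; first lra; split; first lra.
  move=> z /aP Pz; split; first by left.
  by move=> /SF/FLA[Lz _]; exact: Pn_Ln Pz Lz.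
- have nFa : ~ F a by move=> /FLA[_].
  have [e [e0 aeF]] := cF a (AL Aa) nFa.
  exists e; split=> // z [ze Xz]; split=> // /SF Fz.
  by have : (eball a e `&` F) z by []; rewrite aeF.
- exists 1; split=> // z [->|ze] //.
  have Pz := tangent_ball_Pn ltr01 ze; split; first by left.
  by move=> /SF/FLA[Lz _]; exact: Pn_Ln Pz Lz.
Qed.

Lemma lindelof_countable_closed :
  lindelof X op -> ~ contains_uncountable_closed (@Ln R m `\` A).
Proof.
move=> L [F [FLA [cF ncF]]]; apply: ncF.
have cF' : closed_in X op F by exact: closed_outside_discrete FLA cF _.
have tb x : F x -> op (tball x 1) /\ tball x 1 x.
  by move=> /FLA[Lx nAx]; split; [exact: tball_open | left].
have [g Fg] := lindelof_closed_seq (tau_topology AL) L cF' tb.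
apply: (sub_countable (subset_card_le _) (countable_image g (countableP setT))).
move=> z Fz; have [n [->|ze]] := Fg z Fz; first by exists n.
by have [Lz _] := FLA z Fz; case: (Pn_Ln (tangent_ball_Pn ltr01 ze) Lz).
Qed.

Definition subordinate (I : Type) (U : I -> set P) (t : {ffun 'I_m.+1 -> rat} * rat) :=
  exists i, qball t `&` X `<=` U i.

Definition uncovered (I : Type) (U : I -> set P) : set P :=
  [set z | Ln z /\ forall t, subordinate U t -> ~ qball t z].

Lemma subordinate_qball (I : Type) (U : I -> set P) (i : I) (z : P) :
  op (U i) -> U i z -> ~ (Ln z /\ ~ A z) -> exists2 t, subordinate U t & qball t z.
Proof.
move=> oU Uz nLA; suff [e [e0 eU]] : exists e, 0 < e /\ eball z e `&` X `<=` U i.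
  have [t [tz tsub]] := qball_between z e0; exists t => //.
  by exists i => y [/tsub ? ?]; apply: eU.
case: (oU.1 z Uz) => [Pz|Lz]; last first.
  have Az : A z by apply: contra_notP nLA => nAz.
  by have [e ?] := tau_open_A AL oU Uz Az; exists e.
by have [e [e0 [_ eU]]] := tau_open_Pn AL oU Uz Pz; exists e; split=> // y [/eU].
Qed.

Lemma uncovered_outside (I : Type) (U : I -> set P) :
  (forall i, op (U i)) -> X `<=` \bigcup_i U i -> uncovered U `<=` @Ln R m `\` A.
Proof.
move=> oU XU z [Lz zU]; split=> // Az; have [i _ Uz] := XU z (or_intror Lz).
by have [t tU tz] := subordinate_qball (oU i) Uz (fun h => h.2 Az); exact: zU t tU tz.
Qed.

Lemma uncovered_closed (I : Type) (U : I -> set P) : closed_in_Ln (uncovered U).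
Proof.
split=> [z []//|x Lx nKx].
have [t tU tx] : exists2 t, subordinate U t & qball t x.
  by apply: contra_notP nKx => nt; split=> // t tU tx; apply: nt; exists t.
have [e [e0 eqt]] := qball_open tx; exists e; split=> //.
by apply/seteqP; split=> // z [/eqt zt [_ Kz]]; exact: Kz t tU zt.
Qed.

Lemma countable_closed_lindelof :
  ~ contains_uncountable_closed (@Ln R m `\` A) -> lindelof X op.
Proof.
move=> noF I U [oU XU]; have [i0 _] := XU _ (or_intror (erefl : Ln (fun _ => 0))).
have pick_t t : exists i, subordinate U t -> qball t `&` X `<=` U i.
  by have [[i ?]|] := pselect (subordinate U t); [exists i | exists i0].
have pick_z z : exists i, X z -> U i z.
  by have [/XU[i _ ?]|] := pselect (X z); [exists i | exists i0].
have [[it itU] [iz izU]] := (choice pick_t, choice pick_z).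
have cntK : countable (uncovered U).
  apply: contra_notP noF => ncK; exists (uncovered U).
  by split; [exact: uncovered_outside | split; [exact: uncovered_closed |]].
exists ((it @` subordinate U) `|` (iz @` uncovered U)); split.
  by apply: countable_setU; apply: countable_image.
move=> z Xz; have [[t tU tz]|ntU] := pselect (exists2 t, subordinate U t & qball t z).
  by exists (it t); [left; exists t | exact: itU].
exists (iz z); last exact: izU.
right; exists z => //; split=> [|t tU tz]; last by apply: ntU; exists t.
case: Xz => // Pz; have [i _ Uz] := XU z (or_introl Pz).
by case: ntU; exact: subordinate_qball (oU i) Uz (fun h => Pn_Ln Pz h.1).
Qed.

End LindelofCriterion.

Lemma halving_small (R : realType) (u : nat -> R) : (forall k, 0 < u k) ->
  (forall k, u k.+1 <= u k / 2) -> forall e, 0 < e -> exists k, u k < e.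
Proof.
move=> u0 uhalf e e0.
have ubound k : u k * k.+1%:R <= u 0%N.
  elim: k => [|k IHk]; first by rewrite mulr1.
  rewrite -[k.+2]addn1 natrD; set n := k.+1%:R in IHk *.
  have n1 : 1 <= n by rewrite ler1n.
  have := uhalf k; have := u0 k; nra.
have eu : 0 < e / u 0%N by rewrite divr_gt0.
have [k ek] := ltr_add_invr eu; rewrite add0r in ek; exists k.
have k0 : 0 < k.+1%:R :> R by rewrite ltr0n.
rewrite -(ltr_pM2r k0); apply: le_lt_trans (ubound k) _.
move: ek; rewrite -(ltr_pM2r (mulr_gt0 (u0 0%N) k0)) mulrCA mulVf ?gt_eqF //.
by rewrite mulrA divfK ?gt_eqF // mulr1.
Qed.

Section NestedBalls.
Variables (R : realType) (m : nat).
Local Notation P := (pt R m).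

Lemma nested_balls_meet (c : nat -> P) (rho : nat -> R) : (forall k, 0 < rho k) ->
  (forall k, edist (c k.+1) (c k) + rho k.+1 <= rho k) ->
  exists x : P, forall k, edist x (c k) <= m.+1%:R * rho k.
Proof.
move=> rho0 nested.
have step k i : `|c k.+1 i - c k i| <= rho k - rho k.+1.
  by have := coord_le_edist (c k.+1) (c k) i; have := nested k; lra.
have shrink i k l : (k <= l)%N ->
    c k i - rho k <= c l i - rho l /\ c l i + rho l <= c k i + rho k.
  elim: l => [|l IHl]; first by rewrite leqn0 => /eqP ->; split; lra.
  rewrite leq_eqVlt => /orP[/eqP ->|kl]; first by split; lra.
  have [? ?] := IHl kl; have := step l i; rewrite ler_norml => /andP[? ?].
  by split; lra.
have lower_upper i k l : c l i - rho l <= c k i + rho k.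
  have := rho0 k; have := rho0 l; have [kl|/ltnW lk] := leqP k l.
    by have [_ ?] := shrink i k l kl; lra.
  by have [? _] := shrink i l k lk; lra.
pose lower i := [set c k i - rho k | k in [set: nat]].
have lower_ub i : has_ubound (lower i).
  by exists (c 0%N i + rho 0%N) => _ [l _ <-]; exact: lower_upper.
exists (fun i => sup (lower i)) => k.
apply: edist_le_coord => [|i]; first exact: ltW.
have : c k i - rho k <= sup (lower i) by apply: ub_le_sup (lower_ub i) _ _; exists k.
have : sup (lower i) <= c k i + rho k.
  by apply: ge_sup; [exists (c k i - rho k), k | move=> _ [l _ <-]; exact: lower_upper].
by rewrite ler_norml => ? ?; apply/andP; split; lra.
Qed.

End NestedBalls.

Definition eclosed (R : realType) (m : nat) (Q : set (pt R m)) :=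
  forall y, (forall e, 0 < e -> exists p, Q p /\ edist p y < e) -> Q y.

Section Baire.
Variables (R : realType) (m : nat).
Local Notation P := (pt R m).
Variable Q : set P.
Hypothesis Q_closed : eclosed Q.
Hypothesis Q_perfect :
  forall c rho z, Q c -> 0 < rho -> exists y, Q y /\ edist y c < rho /\ y <> z.
Variable q : nat -> P.
Hypothesis q_in : forall j, Q (q j).
Hypothesis q_dense : forall c e, Q c -> 0 < e -> exists j, edist (q j) c < e.
Variable r : nat -> R.
Hypothesis r_gt0 : forall j, 0 < r j.
Local Notation M := (m.+1%:R : R).

(* s' = (c', rho') is a ball inside s, at most half as large, centred at some q_j with
   M rho' < r_j, whose M-fold enlargement misses q_k (M bounds edist by the coordinates). *)
Definition next_ball k (s s' : P * R) :=
  Q s'.1 /\ 0 < s'.2 /\ edist s'.1 s.1 + s'.2 <= s.2 /\ s'.2 <= s.2 / 2 /\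
  M * s'.2 < edist s'.1 (q k) /\ exists j, s'.1 = q j /\ M * s'.2 < r j.

Lemma next_ball_ex k (c : P) (rho : R) : Q c -> 0 < rho -> exists s', next_ball k (c, rho) s'.
Proof.
move=> Qc rho0; have rho4 : 0 < rho / 4 by lra.
have [y [Qy [yc ynq]]] := Q_perfect (q k) Qc rho4.
have yq := edist_gt0 ynq.
set d : R := Num.min (rho / 4) (edist y (q k) / 2).
have d0 : 0 < d by rewrite lt_min rho4 divr_gt0.
have [d1 d2] : d <= rho / 4 /\ d <= edist y (q k) / 2 by split; rewrite ge_min lexx ?orbT.
have [j qjy] := q_dense Qy d0.
have := edist_triangle (q j) y c; have := edist_triangle y (q j) (q k).
rewrite (edistC y (q j)) => t2 t1.
set a : R := Num.min (Num.min (rho / 2 - edist (q j) c) (edist (q j) (q k))) (r j).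
have a0 : 0 < a by rewrite !lt_min r_gt0 andbT; apply/andP; split; lra.
have [a1 a2 a3] : [/\ a <= rho / 2 - edist (q j) c, a <= edist (q j) (q k) & a <= r j].
  by split; rewrite !ge_min ?lexx ?orbT.
have M1 : 1 <= M by rewrite ler1n.
have x0 : 0 < a / (2 * M) by rewrite divr_gt0 // mulr_gt0 //; lra.
have Mx : M * (a / (2 * M)) = a / 2 by field; rewrite addrC natr1 pnatr_eq0.
have xa : a / (2 * M) <= a / 2 by rewrite -Mx ler_peMl // ltW.
set x := a / (2 * M) in x0 Mx xa *.
exists (q j, x); rewrite /next_ball /=; split; first exact: q_in.
have := edist_ge0 (q j) c; do 4!(split; first lra).
by exists j; split=> //; lra.
Qed.

Lemma baire (c0 : P) : Q c0 -> exists x, Q x /\ (forall k, x <> q k) /\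
  forall e, 0 < e -> exists j, edist x (q j) < Num.min e (r j).
Proof.
move=> Qc0.
have pick (ks : nat * (P * R)) : exists s', Q ks.2.1 -> 0 < ks.2.2 -> next_ball ks.1 ks.2 s'.
  case: ks => k [c rho] /=; have [Qc|] := pselect (Q c); last by exists (c, rho).
  have [rho0|] := pselect (0 < rho); last by exists (c, rho).
  by have [s' ?] := next_ball_ex k Qc rho0; exists s'.
have [nb nbP] := choice pick.
pose s := fix s k := if k is k'.+1 then nb (k', s k') else (c0, 1).
have s_ok k : Q (s k).1 /\ 0 < (s k).2.
  elim: k => [|k [Qs s0]]; first by split=> //=; exact: ltr01.
  by have [? [? _]] := nbP (k, s k) Qs s0.
have s_step k : next_ball k (s k) (s k.+1) by have [? ?] := s_ok k; exact: nbP.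
have [x xs] := nested_balls_meet (c := fun k => (s k).1) (fun k => (s_ok k).2)
  (fun k => (s_step k).2.2.1).
have M1 : 1 <= M by rewrite ler1n.
have Mrho e : 0 < e -> exists k, M * (s k).2 < e.
  move=> e0; have eM : 0 < e / M by rewrite divr_gt0 //; lra.
  have [k ke] := halving_small (fun k => (s_ok k).2) (fun k => (s_step k).2.2.2.1) eM.
  by exists k; rewrite mulrC -ltr_pdivlMr //; lra.
exists x; split; [|split].
- apply: Q_closed => e /Mrho[k ke]; exists (s k).1; split; first exact: (s_ok k).1.
  by rewrite edistC; exact: le_lt_trans (xs k) ke.
- move=> k xq; have [_ [_ [_ [_ [far _]]]]] := s_step k.
  by have := xs k.+1; rewrite xq edistC; lra.
move=> e /Mrho[k ke]; have [_ [_ [_ [half [_ [j [sj rj]]]]]]] := s_step k.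
have := (s_ok k).2; have := xs k.+1; rewrite sj => xq sk0.
by exists j; rewrite lt_min; apply/andP; split; nra.
Qed.

End Baire.

Section Condensation.
Variables (R : realType) (m : nat).
Local Notation P := (pt R m).
Variable F : set P.

Definition condensation : set P :=
  [set x | F x /\ forall e, 0 < e -> ~ countable (F `&` eball x e)].

Lemma countable_setD_condensation : countable (F `\` condensation).
Proof.
pose small := [set t : {ffun 'I_m.+1 -> rat} * rat | countable (F `&` qball t)].
apply: sub_countable (subset_card_le _) (bigcup_countable (countableP small) (fun t st => st)).
move=> x [Fx nKx].
have [e [e0 ce]] : exists e, 0 < e /\ countable (F `&` eball x e).
  by apply: contra_notP nKx => nce; split=> // e e0 ce; apply: nce; exists e.
have [t [tx te]] := qball_between x e0; exists t => //.
by apply: sub_countable (subset_card_le _) ce => z [Fz /te].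
Qed.

Lemma uncountable_condensation : ~ countable F -> condensation !=set0.
Proof.
move=> ncF; apply: contra_notP ncF => nK.
have -> : F = condensation `|` (F `\` condensation).
  by rewrite setDUK // => x [].
apply: countable_setU countable_setD_condensation.
by rewrite (_ : condensation = set0) //; apply/seteqP; split=> // x Kx; apply: nK; exists x.
Qed.

Lemma condensation_eclosed : eclosed F -> eclosed condensation.
Proof.
move=> Fc y ycl; split.
  by apply: Fc => e /ycl[p [[Fp _] py]]; exists p.
move=> e e0 ce; have [p [[_ pK] py]] := ycl (e / 2) ltac:(lra).
apply: (pK (e / 2)); first lra.
apply: sub_countable (subset_card_le _) ce => z [Fz zp].
by split=> //; have := edist_triangle z p y; rewrite /eball /= in zp *; lra.
Qed.

Lemma condensation_perfect c rho z : condensation c -> 0 < rho ->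
  exists y, condensation y /\ edist y c < rho /\ y <> z.
Proof.
move=> [_ cK] rho0; apply: contra_notP (cK _ rho0) => none.
have cz := countable_setU (countable1 z) countable_setD_condensation.
apply: sub_countable (subset_card_le _) cz.
move=> w [Fw wc]; have [Kw|] := pselect (condensation w); last by right.
by left; apply: contra_notP none => wz; exists w.
Qed.

End Condensation.

Section UncountableClosed.
Variables (R : realType) (m : nat).
Local Notation P := (pt R m).

Lemma closed_in_Ln_eclosed (F : set P) : closed_in_Ln F -> eclosed F.
Proof.
move=> [FL cF] y ycl.
have Ly : Ln y.
  apply/eqP; rewrite -normr_le0 leNgt; apply/negP => /ycl[p [/FL Lp py]].
  have := le_lt_trans (coord_le_edist p y ord_max) py.
  by rewrite Lp sub0r normrN ltxx.
have [//|nFy] := pselect (F y); have [e [e0 yeF]] := cF y Ly nFy.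
have [p [Fp py]] := ycl e e0.
suff : (eball y e `&` F) p by rewrite yeF.
by split=> //; rewrite /eball /= edistC.
Qed.

Lemma separable (Q : set P) (c0 : P) : Q c0 -> exists q : nat -> P, (forall j, Q (q j)) /\
  forall c e, Q c -> 0 < e -> exists j, edist (q j) c < e.
Proof.
move=> Qc0.
have pick (t : {ffun 'I_m.+1 -> rat} * rat) :
    exists p, Q p /\ ((Q `&` qball t) !=set0 -> qball t p).
  by have [[p [Qp tp]]|none] := pselect ((Q `&` qball t) !=set0); [exists p | exists c0].
have [p pP] := choice pick.
exists (fun j => if choice.unpickle j is Some t then p t else c0); split.
  by move=> j; case: choice.unpickle => [t|] //; exact: (pP t).1.
move=> c e Qc e0; have [t [tc te]] := qball_between c e0.
by exists (choice.pickle t); rewrite choice.pickleK; apply: te; apply: (pP t).2; exists c.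
Qed.

(* Baire category inside the perfect set of condensation points of F, where {q_j} is dense. *)
Lemma baire_approximation (F : set P) : closed_in_Ln F -> ~ countable F ->
  exists q : nat -> P, (forall j, F (q j)) /\ forall r : nat -> R, (forall j, 0 < r j) ->
    exists x, F x /\ (forall k, x <> q k) /\
      forall e, 0 < e -> exists j, edist x (q j) < Num.min e (r j).
Proof.
move=> cF ncF; have [c0 Kc0] := uncountable_condensation ncF.
have [q [Kq q_dense]] := separable Kc0.
exists q; split=> [j|r r0]; first by have [] := Kq j.
have [x [[Fx _] xq]] := baire (condensation_eclosed (closed_in_Ln_eclosed cF))
  (@condensation_perfect _ _ F) Kq q_dense r0 Kc0.
by exists x.
Qed.

End UncountableClosed.

Section ApproximatingSubsequence.
Variables (R : realType) (m : nat).
Local Notation P := (pt R m).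

Lemma approximating_subseq (x : P) (q : nat -> P) (r : nat -> R) :
  (forall k, x <> q k) -> (forall e, 0 < e -> exists j, edist x (q j) < Num.min e (r j)) ->
  forall s, 0 < s -> exists kk : nat -> nat,
    injective (q \o kk) /\ forall n, edist x (q (kk n)) < Num.min s (r (kk n)).
Proof.
move=> xq approx s s0.
have pick e : exists j, 0 < e -> edist x (q j) < Num.min e (r j).
  by have [/approx[j ?]|] := pselect (0 < e); [exists j | exists 0%N].
have [nx nxP] := choice pick.
pose d j := edist x (q j); have d0 j : 0 < d j := edist_gt0 (xq j).
pose kk := fix kk n := if n is n'.+1 then nx (Num.min s (d (kk n'))) else nx s.
have step n : d (kk n.+1) < Num.min (Num.min s (d (kk n))) (r (kk n.+1)).
  by apply: nxP; rewrite lt_min s0 d0.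
have decr n : d (kk n.+1) < d (kk n).
  by have := step n; rewrite !lt_min => /andP[/andP[]].
have mono n n' : (n < n')%N -> d (kk n') < d (kk n).
  elim: n' => // n' IHn'; rewrite ltnS leq_eqVlt => /orP[/eqP <-|/IHn']; first exact: decr.
  exact: lt_trans (decr n').
exists kk; split=> [n n' /= qnn|[|n]]; first last.
- by have := step n; rewrite !lt_min => /andP[/andP[-> _] ->].
- exact: nxP.
have dnn : d (kk n) = d (kk n') by rewrite /d qnn.
by case: (ltngtP n n') => // /mono; rewrite dnn ltxx.
Qed.

End ApproximatingSubsequence.

Section NonLindelof.
Variables (R : realType) (m : nat) (A : set (pt R m)).
Hypothesis AL : A `<=` @Ln R m.
Local Notation P := (pt R m).
Local Notation X := (@Xn R m).
Local Notation op := (tau_open A).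

Lemma normal_countable_closed :
  normal X op -> ~ contains_uncountable_closed (@Ln R m `\` A).
Proof.
move=> N [F [FLA [cF ncF]]].
have [q [Fq approx]] := baire_approximation cF ncF.
have cD : closed_in X op (range q).
  by apply: (closed_outside_discrete AL FLA cF) => _ [j _ <-].
have cG : closed_in X op (F `\` range q) by apply: (closed_outside_discrete AL FLA cF) => y [].
have [U [V [oU [oV [DU [GV UV]]]]]] := N _ _ cD cG (setDIK _ _).
have LAq j : Ln (q j) /\ ~ A (q j) := FLA _ (Fq j).
have rU j : exists e, 0 < e /\ tball (q j) e `<=` U.
  have Dq : range q (q j) by exists j.
  by have [e ?] := tau_open_tball oU (DU _ Dq) (LAq j).1 (LAq j).2; exists e.
have [r rP] := choice rU.
have [x [Fx [xq xapprox]]] := approx r (fun j => (rP j).1).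
have [Lx nAx] := FLA x Fx.
have Gx : (F `\` range q) x by split=> // -[j _ /esym/xq].
have [s [s0 sV]] := tau_open_tball oV (GV x Gx) Lx nAx.
have [j xj] := xapprox s s0.
have [z [xz qz]] := tball_meet s0 (rP j).1 Lx (LAq j).1 xj.
suff : (U `&` V) z by rewrite UV.
by split; [exact: (rP j).2 | exact: sV].
Qed.

Lemma countably_paracompact_isolating_cover (F : set P) (q : nat -> P) :
  countably_paracompact X op -> F `<=` @Ln R m `\` A -> closed_in_Ln F ->
  (forall j, F (q j)) -> exists (J : Type) (V : J -> set P) (jq : nat -> J),
    [/\ forall j, op (V j), locally_finite X op V, forall k, V (jq k) (q k) &
       forall k z, V (jq k) z -> F z -> z = q k].
Proof.
move=> CP FLA cF Fq.
have cD : closed_in X op (range q).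
  by apply: (closed_outside_discrete AL FLA cF) => _ [j _ <-].
have [FX oXF] : closed_in X op F by apply: (closed_outside_discrete AL FLA cF).
have LAq j : Ln (q j) /\ ~ A (q j) := FLA _ (Fq j).
pose W n := if n is k.+1 then (X `\` F) `|` tball (q k) 1 else X `\` range q.
have [|J [V [[oV XV] [VW lfV]]]] := CP W.
  split=> [[|k]|z Xz] /=; first exact: cD.2.
    by apply: tau_openU => //; exact: tball_open (LAq k).1 (LAq k).2 ltr01.
  have [[k _ <-]|nDz] := pselect (range q z); last by exists 0%N.
  by exists k.+1 => //; right; left.
have pick k : exists j, V j (q k) by have [j _ ?] := XV _ (or_intror (LAq k).1); exists j.
have [jq Vjq] := choice pick; exists J, V, jq; split=> // k.
have [[|l] Vl] := VW (jq k); first by case: (Vl _ (Vjq k)) => _ []; exists k.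
have onL y : V (jq k) y -> F y -> y = q l.
  by move=> /Vl[[_ nFy] /nFy[]|ty /FLA[Ly _]]; exact: tball_Ln ltr01 ty Ly.
by move=> z Vz Fz; rewrite (onL z Vz Fz) (onL _ (Vjq k) (Fq k)).
Qed.

Lemma countably_paracompact_countable_closed :
  countably_paracompact X op -> ~ contains_uncountable_closed (@Ln R m `\` A).
Proof.
move=> CP [F [FLA [cF ncF]]].
have [q [Fq approx]] := baire_approximation cF ncF.
have [J [V [jq [oV lfV Vjq VF]]]] := countably_paracompact_isolating_cover CP FLA cF Fq.
have LAq j : Ln (q j) /\ ~ A (q j) := FLA _ (Fq j).
have rV k : exists e, 0 < e /\ tball (q k) e `<=` V (jq k).
  by have [e ?] := tau_open_tball (oV (jq k)) (Vjq k) (LAq k).1 (LAq k).2; exists e.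
have [r rP] := choice rV.
have [x [Fx [xq xapprox]]] := approx r (fun k => (rP k).1).
have [Lx nAx] := FLA x Fx.
have [U [oU [Ux finU]]] := lfV x (or_intror Lx).
have [s [s0 sU]] := tau_open_tball oU Ux Lx nAx.
have [kk [kk_inj kkP]] := approximating_subseq xq xapprox s0.
have jkk_inj : injective (jq \o kk).
  move=> n n' /= jnn; apply: kk_inj => /=; apply/esym; apply: (VF (kk n)); last exact: Fq.
  by rewrite jnn; exact: Vjq.
have near n : (V (jq (kk n)) `&` U) !=set0.
  have [z [xz qz]] := tball_meet s0 (rP (kk n)).1 Lx (LAq (kk n)).1 (kkP n).
  by exists z; split; [exact: (rP (kk n)).2 | exact: sU].
apply: infinite_nat; rewrite -(eq_finite_set (inj_card_eq (fun a b _ _ => jkk_inj a b))).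
by apply: sub_finite_set finU => _ [n _ <-]; exact: near.
Qed.

End NonLindelof.

Theorem mainTheorem6 (R : realType) (m : nat) (hm : (1 <= m)%N)
    (A : set (pt R m)) (hA : A `<=` @Ln R m) :
  let X := @Xn R m in
  let op := tau_open A in
  (lindelof X op <-> paracompact X op) /\
  (lindelof X op <-> countably_paracompact X op) /\
  (lindelof X op <-> normal X op) /\
  (lindelof X op <->
     ~ exists F : set (pt R m),
         F `<=` @Ln R m `\` A /\ closed_in_Ln F /\ ~ countable F).
Proof.
move=> X op.
have top := tau_topology hA; have reg := tau_regular hA.
have LP : lindelof X op -> paracompact X op := lindelof_paracompact top reg.
have PC : paracompact X op -> countably_paracompact X op by move=> + U; exact.
have CL : countably_paracompact X op -> lindelof X op.
  by move=> /(countably_paracompact_countable_closed hA)/(countable_closed_lindelof hA).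
split; first by split=> // /PC/CL.
split; first by split=> // /LP/PC.
split; first by split=> [/(lindelof_normal top reg) | /(normal_countable_closed hA)];
  last exact: countable_closed_lindelof.
by split; [exact: lindelof_countable_closed | exact: countable_closed_lindelof].
Qed.
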